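(* Let $\alpha$ be a reduced operation sequence of size $n$ producing the permutation $\pi$. Then the set of elements produced by the peaks of $\alpha$ equals the set of right-to-left maxima of $\pi$, i.e. the set of entries $\pi_j$ such that $\pi_j>\pi_k$ for all $k>j$.
   Context: Operation sequences: $\sigma[a]$ ($a\ge1$) denotes pushing the top $a$ elements of the input stack, as a block with relative order unchanged, onto the top of a working stack; $\tau[b]$ ($b\ge1$) denotes moving the top $b$ elements of the working stack, as a block with relative order unchanged, onto the top of an output stack; $\sigma=\sigma[1]$, $\tau=\tau[1]$. A well-formed operation sequence is a word $\alpha=\alpha_1\cdots\alpha_m$ in these symbols such that in every prefix the total push size is at least the total pop size, with equality for the whole word; its size $n$ is the total push size. Acting on an input stack containing $1,2,\dots,n$ with $1$ on top, it produces the permutation $\pi=\pi_1\cdots\pi_n$ obtained by reading the final output stack from top to bottom. $\alpha$ is reduced if every consecutive pair $\alpha_i\alpha_{i+1}$ with $\alpha_i$ a push and $\alpha_{i+1}$ a pop equals $\sigma[1]\tau[1]$. Such a pair in a reduced sequence is a peak, and the element pushed by $\alpha_i$ (equivalently popped by $\alpha_{i+1}$) is the element produced by that peak. *)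

From mathcomp Require Import all_boot.
Set Implicit Arguments. Unset Strict Implicit. Unset Printing Implicit Defensive.

(* An operation: Push a = sigma[a], Pop b = tau[b]. *)
Inductive op := Push of nat | Pop of nat.

Definition push_size (o : op) : nat := if o is Push a then a else 0.
Definition pop_size (o : op) : nat := if o is Pop b then b else 0.
Definition is_push (o : op) : bool := if o is Push _ then true else false.
Definition is_pop (o : op) : bool := if o is Pop _ then true else false.

Definition total_push (w : seq op) : nat := sumn (map push_size w).
Definition total_pop (w : seq op) : nat := sumn (map pop_size w).

Definition well_formed (w : seq op) : Prop :=
  (forall i, i < size w -> 0 < push_size (nth (Pop 0) w i) + pop_size (nth (Pop 0) w i)) /\
  (forall i, total_pop (take i w) <= total_push (take i w)) /\
  total_pop w = total_push w.

Definition op_size (w : seq op) : nat := total_push w.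

(* State: (input stack, working stack, output stack), heads are tops. *)
Definition state := (seq nat * seq nat * seq nat)%type.

Definition step (s : state) (o : op) : state :=
  let: (inp, wk, out) := s in
  match o with
  | Push a => (drop a inp, take a inp ++ wk, out)
  | Pop b => (inp, drop b wk, take b wk ++ out)
  end.

Definition init_state (n : nat) : state := (iota 1 n, [::], [::]).

Definition exec (n : nat) (w : seq op) : state := foldl step (init_state n) w.

Definition produced_perm (n : nat) (w : seq op) : seq nat := (exec n w).2.

Definition reduced (w : seq op) : Prop :=
  forall i, i.+1 < size w ->
    is_push (nth (Pop 0) w i) -> is_pop (nth (Pop 0) w i.+1) ->
    nth (Pop 0) w i = Push 1 /\ nth (Pop 0) w i.+1 = Pop 1.

(* Peak at position i (0-based): alpha_i alpha_{i+1} = sigma[1] tau[1]. *)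
Definition peak (w : seq op) (i : nat) : Prop :=
  i.+1 < size w /\ nth (Pop 0) w i = Push 1 /\ nth (Pop 0) w i.+1 = Pop 1.

Definition pushed_elt (n : nat) (w : seq op) (i : nat) : nat :=
  head 0 (exec n (take i w)).1.1.

Definition rl_max (pi : seq nat) (x : nat) : Prop :=
  exists j, j < size pi /\ nth 0 pi j = x /\
    forall k, j < k < size pi -> nth 0 pi k < x.

From Stdlib Require Import Setoid.
From mathcomp Require Import all_boot zify.

Set Implicit Arguments.
Unset Strict Implicit.
Unset Printing Implicit Defensive.

(* The input holds 1, ..., n in increasing order, so the element produced by a
   peak exceeds everything pushed before it: it lands on top of the output as a
   new right-to-left maximum.  Every other pop only moves working-stack
   elements, and after any pop each working-stack element is smaller than some
   output element (the one produced by the latest peak, or its earlier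
   dominator), so such pops create no new right-to-left maxima. *)

Lemma exec_take_S n w i : i < size w ->
  exec n (take i.+1 w) = step (exec n (take i w)) (nth (Pop 0) w i).
Proof. by move=> ltiw; rewrite /exec (take_nth (Pop 0) ltiw) -cats1 foldl_cat. Qed.

Lemma total_push_take_S w i : i < size w ->
  total_push (take i.+1 w) = total_push (take i w) + push_size (nth (Pop 0) w i).
Proof.
by move=> ltiw; rewrite /total_push (take_nth (Pop 0) ltiw) map_rcons sumn_rcons.
Qed.

Lemma total_push_take_le w i : total_push (take i w) <= total_push w.
Proof. by rewrite -{2}(cat_take_drop i w) /total_push map_cat sumn_cat leq_addr. Qed.

Lemma foldl_step_stacks (s : seq nat) (w : seq op) :
  let: (inp, wk, out) := foldl step (s, [::], [::]) w in
  inp = drop (total_push w) s /\ perm_eq (wk ++ out) (take (total_push w) s).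
Proof.
elim/last_ind: w => [|w o IH]; first by rewrite /= drop0 take0.
rewrite foldl_rcons /total_push map_rcons sumn_rcons -/(total_push w).
case: (foldl step _ w) IH => [[inp wk] out] [-> wk_out_perm].
case: o => [a|b] /=.
- rewrite drop_drop addnC; split=> //.
  by rewrite takeD -catA perm_catC perm_cat2r.
- rewrite addn0; split=> //.
  apply: perm_trans wk_out_perm.
  by rewrite catA perm_cat2r perm_catC cat_take_drop.
Qed.

Lemma exec_around_peak n w j : op_size w = n -> peak w j ->
  exists inp wk out, [/\ exec n (take j.+1 w) = (inp, pushed_elt n w j :: wk, out),
    exec n (take j.+2 w) = (inp, wk, pushed_elt n w j :: out) &
    forall y, y \in wk ++ out -> y < pushed_elt n w j].
Proof.
move=> size_w [ltjw [opj opj1]]; have ltjw' : j < size w by lia.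
have c_lt_n : total_push (take j w) < n.
  rewrite -size_w; apply: leq_trans (total_push_take_le w j.+1).
  by rewrite total_push_take_S // opj addn1.
rewrite !exec_take_S // opj opj1 /pushed_elt.
have := foldl_step_stacks (iota 1 n) (take j w).
rewrite /exec /init_state; case: foldl => [[inp wk] out] [-> wk_out_perm].
move: c_lt_n wk_out_perm; set c := total_push _ => c_lt_n wk_out_perm.
rewrite drop_iota -(subnSK c_lt_n) /=.
exists (iota (1 + c).+1 (n - c.+1)), wk, out.
rewrite /= !drop0 !take0; split=> // y.
by rewrite (perm_mem wk_out_perm) take_iota mem_iota; lia.
Qed.

Lemma reduced_pop_cases w i : reduced w -> i < size w -> is_pop (nth (Pop 0) w i) ->
  (i = 0 \/ is_pop (nth (Pop 0) w i.-1)) \/ exists2 j, i = j.+1 & peak w j.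
Proof.
case: i => [|j] red_w ltiw pop_i; first by left; left.
case opj: (nth (Pop 0) w j) => [a|b]; last by left; right.
have := red_w j ltiw; rewrite opj => /(_ erefl pop_i) [opj1 opj11].
by right; exists j; rewrite // /peak -opj1 opj11.
Qed.

Lemma nth_cat_size_addl (T : Type) (x0 : T) (s1 s2 : seq T) k :
  nth x0 (s1 ++ s2) (size s1 + k) = nth x0 s2 k.
Proof. by rewrite nth_cat ltnNge leq_addr addKn. Qed.

Lemma rl_max_catl B O x : rl_max O x -> rl_max (B ++ O) x.
Proof.
case=> j [ltjO [Ojx Ogt]]; exists (size B + j).
rewrite size_cat nth_cat_size_addl; split; first lia.
split=> // k /andP[ltjk ltkBO]; have leBk : size B <= k by lia.
rewrite -(subnKC leBk) nth_cat_size_addl.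
by apply: Ogt; apply/andP; split; lia.
Qed.

Lemma rl_max_cat_inv B O x : rl_max (B ++ O) x ->
  rl_max O x \/ x \in B /\ forall y, y \in O -> y < x.
Proof.
case=> j [ltjBO [BOjx BOgt]]; rewrite size_cat in ltjBO BOgt.
have BOgtO k : k < size O -> j < size B + k -> nth 0 O k < x.
  move=> ltkO ltjk; rewrite -(nth_cat_size_addl 0 B); apply: BOgt; lia.
case: (ltnP j (size B)) => [ltjB|leBj]; [right | left].
- rewrite nth_cat ltjB in BOjx; split; first by rewrite -BOjx mem_nth.
  move=> y yO; rewrite -(nth_index 0 yO); apply: BOgtO; rewrite ?index_mem //.
  lia.
- rewrite -(subnKC leBj) nth_cat_size_addl in BOjx; exists (j - size B).
  split; first lia; split=> // k /andP[ltjk ltkO].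
  by apply: BOgtO; lia.
Qed.

Definition dominated (B O : seq nat) : Prop :=
  forall y, y \in B -> exists2 z, z \in O & y < z.

Lemma rl_max_cat_dominated B O x :
  dominated B O -> rl_max (B ++ O) x <-> rl_max O x.
Proof.
move=> domBO; split; last exact: rl_max_catl.
case/rl_max_cat_inv=> // -[xB Ogt].
by have [z zO ltxz] := domBO x xB; have := Ogt z zO; lia.
Qed.

Lemma rl_max_cons_gt z O x :
  (forall y, y \in O -> y < z) -> rl_max (z :: O) x <-> x = z \/ rl_max O x.
Proof.
move=> Ogt; split.
- by case/(@rl_max_cat_inv [:: z]) => [|[/[!inE] /eqP]]; [right | left].
- case=> [->|]; last exact: (@rl_max_catl [:: z]).
  exists 0; split=> //; split=> // -[//|k] /= ltkO.
  by apply: Ogt; apply: mem_nth.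
Qed.

Lemma pop_dominated_rl_max wk out b : dominated wk out ->
  dominated (drop b wk) (take b wk ++ out) /\
  forall x, rl_max (take b wk ++ out) x <-> rl_max out x.
Proof.
move=> dom_wk; split=> [y /mem_drop /dom_wk [z zout ltyz] | x].
  by exists z; rewrite // mem_cat zout orbT.
by apply: rl_max_cat_dominated => y /mem_take; apply: dom_wk.
Qed.

Definition peak_elt_before n w i x :=
  exists p, p.+2 <= i /\ peak w p /\ pushed_elt n w p = x.

Lemma peak_elt_before_S n w i x :
  peak_elt_before n w i.+1 x <->
  peak_elt_before n w i x \/ exists2 j, i = j.+1 & peak w j /\ pushed_elt n w j = x.
Proof.
split.
- case=> p [ltpi [pk px]]; case: (ltngtP p.+2 i.+1) ltpi => // [ltpi | [eqpi]] _.
    by left; exists p.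
  by right; exists p.
- case=> [[p [ltpi pkx]] | [j -> pkx]]; first by exists p; split=> //; lia.
  by exists j.
Qed.

Lemma exec_output_rl_max n w i : op_size w = n -> reduced w -> i <= size w ->
  let: (_, wk, out) := exec n (take i w) in
  (forall x, rl_max out x <-> peak_elt_before n w i x) /\
  ((i = 0 \/ is_pop (nth (Pop 0) w i.-1)) -> dominated wk out).
Proof.
move=> size_w red_w; elim: i => [|i IH] ltiw.
  by rewrite take0; split=> // x; split=> [[j []] | [p []]].
have {}ltiw : i < size w by [].
move: (IH (ltnW ltiw)).
case Ei: (exec n (take i w)) => [[inp wk] out] [rl_out dom_out].
case: (boolP (is_pop (nth (Pop 0) w i))) => [pop_i | push_i].
- have [after_pop | [j eqij pkj]] := reduced_pop_cases red_w ltiw pop_i.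
  + rewrite exec_take_S // Ei; case: nth pop_i => [//|b] _ /=.
    have [dom_out' rl_out'] := pop_dominated_rl_max b (dom_out after_pop).
    split=> // x; rewrite rl_out' peak_elt_before_S rl_out.
    split=> [|[// | [j eqij [[_ [opj _]] _]]]]; first by left.
    by case: after_pop eqij => [-> // | + eqij]; rewrite eqij opj.
  + subst i.
    have [inp' [wk' [out' [Ej1 Ej2 gt_pushed]]]] := exec_around_peak size_w pkj.
    move: Ei; rewrite Ej1 Ej2 => -[_ _ eqout]; subst out.
    split=> [x | _ y ywk]; last first.
      exists (pushed_elt n w j); first exact: mem_head.
      by apply: gt_pushed; rewrite mem_cat ywk.
    rewrite rl_max_cons_gt => [|y yout]; last first.
      by apply: gt_pushed; rewrite mem_cat yout orbT.
    rewrite peak_elt_before_S rl_out.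
    split=> [[->|pe] | [pe|[j' [<-] [_ <-]]]];
      [by right; exists j | by left | by right | by left].
- rewrite exec_take_S // Ei; case opi: (nth (Pop 0) w i) push_i => [a|//] _ /=.
  split=> [x|]; last by case.
  rewrite peak_elt_before_S rl_out.
  split=> [|[// | [j eqij [[_ [_ opj1]] _]]]]; first by left.
  by move: opi; rewrite eqij opj1.
Qed.

Theorem mainTheorem8 (n : nat) (alpha : seq op) (pi : seq nat) :
  well_formed alpha -> op_size alpha = n -> reduced alpha ->
  produced_perm n alpha = pi ->
  forall x : nat,
    (exists i, peak alpha i /\ pushed_elt n alpha i = x) <-> rl_max pi x.
Proof.
move=> _ size_alpha red_alpha <- x.
have := exec_output_rl_max size_alpha red_alpha (leqnn (size alpha)).
rewrite take_size /produced_perm; case: exec => [[_ wk] out] [rl_out _] /=.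
rewrite rl_out; split=> [[i [pk pkx]] | [i [_ pkx]]]; last by exists i.
by exists i; split=> //; case: pk; lia.
Qed.
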